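(* Let $\mathcal{P}$ be a locally geometric poset and $\mathcal{Q}$ a TM-ideal of $\mathcal{P}$ with $\operatorname{rk}(\mathcal{Q})=\operatorname{rk}(\mathcal{P})-1$. Then for every $a\in A(\mathcal{P})\setminus A(\mathcal{Q})$ there is a poset isomorphism $\mathcal{Q}\cong\mathcal{P}_{\ge a}$.
   Context: All posets are finite, have a unique minimal element $\hat0$ and are ranked; $\operatorname{rk}$ of a poset is the maximum rank of its elements. $A(\cdot)$ denotes the set of atoms (rank-1 elements). $\bigvee T$ is the set of minimal upper bounds of $T$, $x\vee y=\bigvee\{x,y\}$, $x\wedge y$ the meet. A lattice is geometric if $y$ covers $x$ iff there is an atom $a\not\le x$ with $y=x\vee a$; $\mathcal{P}$ is locally geometric if each $\mathcal{P}_{\le x}$ is a geometric lattice. An element $x$ of a geometric lattice $L$ is modular if $x\wedge(y\vee z)=(x\wedge y)\vee z$ for all $z\le x$, $y\in L$. An order ideal $\mathcal{Q}$ is pure if all its maximal elements have the same rank and join-closed if $T\subseteq\mathcal{Q}$ implies $\bigvee T\subseteq\mathcal{Q}$. A TM-ideal of $\mathcal{P}$ is a pure, join-closed order ideal $\mathcal{Q}$ such that (1* ) $|a\vee y|=1$ for all $y\in\mathcal{Q}$ and $a\in A(\mathcal{P})\setminus A(\mathcal{Q})$, and (2) for every maximal $x\in\mathcal{P}$ there is a maximal $y\in\mathcal{Q}$ that is modular in $\mathcal{P}_{\le x}$. $\mathcal{P}_{\ge a}=\{y\in\mathcal{P}:y\ge a\}$ with the induced order. *)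

From mathcomp Require Import all_boot all_order.
Set Implicit Arguments. Unset Strict Implicit. Unset Printing Implicit Defensive.
Import Order.Theory.
Local Open Scope order_scope.

Section PosetDefs.
Context {d : Order.disp_t} {T : finPOrderType d}.

Definition covers (x y : T) : bool :=
  (x < y) && [forall z, ~~ ((x < z) && (z < y))].

Definition is_rank_fun (rk : T -> nat) : Prop :=
  (forall x, [forall y, (y <= x) ==> (y == x)] -> rk x = 0) /\
  (forall x y, covers x y -> rk y = (rk x).+1).

Definition rank_of (rk : T -> nat) (S : {set T}) : nat := (\max_(x in S) rk x)%N.

Definition ub (S : {set T}) (y : T) : bool := [forall t in S, t <= y].
Definition mub (S : {set T}) : {set T} :=
  [set y | ub S y & [forall z, (ub S z && (z <= y)) ==> (z == y)]].

Definition below (x : T) : {set T} := [set y | y <= x].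

Definition is_lub (S : {set T}) (u v w : T) : bool :=
  [&& w \in S, u <= w, v <= w & [forall z in S, (u <= z) ==> (v <= z) ==> (w <= z)]].
Definition is_glb (S : {set T}) (u v w : T) : bool :=
  [&& w \in S, w <= u, w <= v & [forall z in S, (z <= u) ==> (z <= v) ==> (z <= w)]].

Definition lattice_below (x : T) : Prop :=
  forall u v, u <= x -> v <= x ->
    (exists w, is_lub (below x) u v w) /\ (exists w, is_glb (below x) u v w).

Definition geometric_below (rk : T -> nat) (x : T) : Prop :=
  lattice_below x /\
  forall u v, v <= x ->
    (covers u v <-> exists a, [/\ rk a = 1, a <= x, ~~ (a <= u) & is_lub (below x) u a v]).

Definition locally_geometric (rk : T -> nat) : Prop := forall x, geometric_below rk x.

(* y is a modular element of the geometric lattice P_{<= x}: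
   y /\ (z \/ w) = (y /\ z) \/ w for all w <= y and z in P_{<= x} *)
Definition modular_in (x y : T) : Prop :=
  y <= x /\
  forall z w, z <= x -> w <= y ->
  forall j m m' j',
    is_lub (below x) z w j -> is_glb (below x) y j m ->
    is_glb (below x) y z m' -> is_lub (below x) m' w j' -> m = j'.

Definition order_ideal (Q : {set T}) : Prop :=
  forall x y, y \in Q -> x <= y -> x \in Q.

Definition maximal_in (S : {set T}) (y : T) : bool :=
  (y \in S) && [forall z in S, (y <= z) ==> (z == y)].

Definition pure (rk : T -> nat) (Q : {set T}) : Prop :=
  forall y1 y2, maximal_in Q y1 -> maximal_in Q y2 -> rk y1 = rk y2.

Definition join_closed (Q : {set T}) : Prop :=
  forall S : {set T}, S \subset Q -> mub S \subset Q.

Definition TM_ideal (rk : T -> nat) (Q : {set T}) : Prop :=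
  [/\ order_ideal Q, pure rk Q, join_closed Q,
      (forall y a, y \in Q -> rk a = 1 -> a \notin Q -> #|mub [set a; y]| = 1) &
      (forall x, maximal_in [set: T] x -> exists y, maximal_in Q y /\ modular_in x y)].

End PosetDefs.

(* Send y in Q to its unique minimal upper bound a \/ y, given by condition 1*.
   For a maximal x, condition (2) yields a maximal y in Q that is modular in the
   geometric lattice P_{<= x}; join-closedness puts every element of Q below x
   under y, and the rank hypothesis makes y a coatom.  Modularity gives
   y /\ (a \/ t) = (y /\ a) \/ t = t for t <= y, so t |-> a \/ t is an order
   embedding with left inverse y /\ -.  For surjectivity let z >= a and
   m = y /\ z: if a \/ m < z, some atom b <= z avoids a \/ m, hence avoids y;
   but by modularity the line a \/ b meets the coatom y in a point c <> 0, so
   b <= a \/ c <= a \/ m, a contradiction. *)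

From Pilot Require Import Defs.
From mathcomp Require Import all_boot all_order zify.
Import Order.Theory.
Local Open Scope order_scope.
Set Implicit Arguments. Unset Strict Implicit. Unset Printing Implicit Defensive.

Section WellFounded.
Context {d : Order.disp_t} {T : finPOrderType d}.

Lemma lt_ind (P : T -> Prop) :
  (forall v, (forall u, u < v -> P u) -> P v) -> forall v, P v.
Proof.
move=> IH v; have [n] := ubnP #|[set u | u < v]|; elim: n v => // n IHn v.
rewrite ltnS => hv; apply: IH => u uv; apply: IHn; apply: leq_trans hv.
apply: proper_card; apply/properP; split.
  by apply/subsetP => t; rewrite !inE => /lt_trans; apply.
by exists u; rewrite !inE ?uv ?ltxx.
Qed.

Lemma ex_minimal (P : pred T) s0 : P s0 ->
  exists2 s, P s & forall t, P t -> ~~ (t < s).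
Proof.
elim/lt_ind: s0 => s0 IH Ps0.
case: (pickP [pred t | P t && (t < s0)]) => [t /andP[Pt ts0] | none].
  exact: IH Pt.
by exists s0 => // t Pt; apply/negP => ts0; move: (none t); rewrite /= Pt ts0.
Qed.

End WellFounded.

Section Extremal.
Context {d : Order.disp_t} {T : finPOrderType d}.
Implicit Types (s t u v : T).

Lemma ex_maximal (P : pred T) s0 : P s0 ->
  exists2 s, P s & forall t, P t -> ~~ (s < t).
Proof. exact: (ex_minimal (T := T^d)). Qed.

Lemma ex_maximal_in (S : {set T}) s0 : s0 \in S ->
  exists2 s, maximal_in S s & s0 <= s.
Proof.
move=> s0S; have /ex_maximal[s /andP[sS s0s] smax] : [pred t | (t \in S) && (s0 <= t)] s0.
  by rewrite /= s0S lexx.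
exists s => //; rewrite /maximal_in sS; apply/forall_inP => t tS; apply/implyP => st.
rewrite eq_le st andbT; move: (smax t); rewrite /= tS (le_trans s0s st).
by move=> /(_ isT); rewrite lt_def st andbT negbK => /eqP->.
Qed.

Lemma ex_cover_above u v : u < v -> exists2 t, covers u t & t <= v.
Proof.
move=> uv; have /ex_minimal[t /andP[ut tv] tmin] : [pred t | (u < t) && (t <= v)] v.
  by rewrite /= uv lexx.
exists t => //; rewrite /covers ut; apply/forallP => z; apply/negP => /andP[uz zt].
by move: (tmin z); rewrite /= uz (le_trans (ltW zt) tv) zt => /(_ isT).
Qed.

Lemma ex_cover_below u v : u < v -> exists2 t, u <= t & covers t v.
Proof.
move=> uv; have /ex_maximal[t /andP[ut tv] tmax] : [pred t | (u <= t) && (t < v)] u.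
  by rewrite /= uv lexx.
exists t => //; rewrite /covers tv; apply/forallP => z; apply/negP => /andP[tz zv].
by move: (tmax z); rewrite /= zv (le_trans ut (ltW tz)) tz => /(_ isT).
Qed.

End Extremal.

Section GeometricPoset.
Context {d : Order.disp_t} {T : finPOrderType d}.
Variables (z0 : T) (rk : T -> nat).
Hypotheses (le0x : forall x, z0 <= x) (rk_fun : is_rank_fun rk).
Implicit Types (S : {set T}) (a b e p x y z u v w t : T).

Lemma rk_bottom : rk z0 = 0.
Proof. by case: rk_fun => -> //; apply/forallP => y; apply/implyP => y0; rewrite eq_le y0 le0x. Qed.

Lemma rk_covers u v : covers u v -> rk v = (rk u).+1.
Proof. by case: rk_fun => _; apply. Qed.

Lemma rk_lt u v : u < v -> (rk u < rk v)%N.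
Proof.
elim/(@lt_ind _ T): v u => v IH u uv; have [t ut tv] := ex_cover_below uv.
rewrite (rk_covers tv) ltnS; case: (eqVneq u t) => [-> // | nut].
by apply/ltnW/IH; [case/andP: tv | rewrite lt_neqAle nut].
Qed.

Lemma rk_le u v : u <= v -> (rk u <= rk v)%N.
Proof. by rewrite le_eqVlt => /predU1P[-> // | /rk_lt/ltnW]. Qed.

Lemma le_rk_inj u v : u <= v -> rk u = rk v -> u = v.
Proof. by rewrite le_eqVlt => /predU1P[// | /rk_lt]; rewrite ltn_neqAle => /andP[/eqP]. Qed.

Lemma le_atom b t : rk b = 1 -> t <= b -> t = z0 \/ t = b.
Proof.
move=> rb tb; have := rk_le tb; rewrite rb.
case rt: (rk t) => [|[|//]] _; last by right; apply: le_rk_inj; rewrite ?rt.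
by left; apply/esym/le_rk_inj; rewrite ?rt ?rk_bottom.
Qed.

Lemma rk_maximal_in S y : pure rk S -> maximal_in S y -> rk y = rank_of rk S.
Proof.
move=> pureS ymax; have S0 : (0 < #|S|)%N by apply/card_gt0P; exists y; case/andP: ymax.
have [q qS rkq] := eq_bigmax_cond rk S0.
have [s smax qs] := ex_maximal_in qS.
rewrite (pureS y s) // /rank_of rkq; apply/eqP; rewrite eqn_leq (rk_le qs) andbT.
by rewrite -rkq; apply: leq_bigmax_cond; case/andP: smax.
Qed.

(* Join and meet in the interval [P_{<= x}]; the default [u] is a junk value. *)
Definition lub x u v := odflt u [pick w | is_lub (below x) u v w].
Definition glb x u v := odflt u [pick w | is_glb (below x) u v w].

Lemma is_lubP x u v w : reflect
  [/\ w <= x, u <= w, v <= w & forall t, t <= x -> u <= t -> v <= t -> w <= t]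
  (is_lub (below x) u v w).
Proof.
apply: (iffP and4P); rewrite inE.
  move=> [-> -> -> /forall_inP wmin]; split => // t tx ut vt.
  by move: (wmin t); rewrite inE => /(_ tx)/implyP/(_ ut)/implyP/(_ vt).
move=> [-> -> -> wmin]; split => //; apply/forall_inP => t; rewrite inE => tx.
by apply/implyP => ut; apply/implyP => vt; apply: wmin.
Qed.

Lemma is_glbP x u v w : reflect
  [/\ w <= x, w <= u, w <= v & forall t, t <= x -> t <= u -> t <= v -> t <= w]
  (is_glb (below x) u v w).
Proof.
apply: (iffP and4P); rewrite inE.
  move=> [-> -> -> /forall_inP wmax]; split => // t tx ut vt.
  by move: (wmax t); rewrite inE => /(_ tx)/implyP/(_ ut)/implyP/(_ vt).
move=> [-> -> -> wmax]; split => //; apply/forall_inP => t; rewrite inE => tx.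
by apply/implyP => ut; apply/implyP => vt; apply: wmax.
Qed.

Lemma lubE x u v w : is_lub (below x) u v w -> lub x u v = w.
Proof.
move=> uvw; rewrite /lub; case: pickP => [w' uvw' | /(_ w)] /=; last by rewrite uvw.
move: uvw uvw' => /is_lubP[wx uw vw wmin] /is_lubP[w'x uw' vw' w'min].
by apply/le_anti/andP; split; [apply: w'min | apply: wmin].
Qed.

Lemma glbE x u v w : is_glb (below x) u v w -> glb x u v = w.
Proof.
move=> uvw; rewrite /glb; case: pickP => [w' uvw' | /(_ w)] /=; last by rewrite uvw.
move: uvw uvw' => /is_glbP[wx wu wv wmax] /is_glbP[w'x w'u w'v w'max].
by apply/le_anti/andP; split; [apply: wmax | apply: w'max].
Qed.

Lemma lub_mub x u v w : is_lub (below x) u v w -> w \in mub [set u; v].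
Proof.
move=> /is_lubP[wx uw vw wmin]; rewrite inE; apply/andP; split.
  by apply/forall_inP => t; rewrite !inE => /orP[] /eqP->.
apply/forallP => t; apply/implyP => /andP[/forall_inP tub tw].
by rewrite eq_le tw wmin ?tub ?(le_trans tw wx) // !inE eqxx ?orbT.
Qed.

Lemma lub_l x u v : v <= u -> u <= x -> lub x u v = u.
Proof. by move=> vu ux; apply/lubE/is_lubP; split. Qed.

Lemma lub_r x u v : u <= v -> v <= x -> lub x u v = v.
Proof. by move=> uv vx; apply/lubE/is_lubP; split. Qed.

Hypothesis lattice : forall x, lattice_below x.

Lemma lubP x u v : u <= x -> v <= x -> is_lub (below x) u v (lub x u v).
Proof. by move=> ux vx; have [[w /[dup] /lubE ->]] := lattice ux vx. Qed.

Lemma glbP x u v : u <= x -> v <= x -> is_glb (below x) u v (glb x u v).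
Proof. by move=> ux vx; have [_ [w /[dup] /glbE ->]] := lattice ux vx. Qed.

Section Bounds.
Variables (x u v : T).
Hypotheses (ux : u <= x) (vx : v <= x).

Lemma lub_le : lub x u v <= x. Proof. by case/is_lubP: (lubP ux vx). Qed.
Lemma le_lubl : u <= lub x u v. Proof. by case/is_lubP: (lubP ux vx). Qed.
Lemma le_lubr : v <= lub x u v. Proof. by case/is_lubP: (lubP ux vx). Qed.
Lemma lub_least t : t <= x -> u <= t -> v <= t -> lub x u v <= t.
Proof. by case/is_lubP: (lubP ux vx) => _ _ _; apply. Qed.

Lemma glb_lel : glb x u v <= u. Proof. by case/is_glbP: (glbP ux vx). Qed.
Lemma glb_ler : glb x u v <= v. Proof. by case/is_glbP: (glbP ux vx). Qed.
Lemma glb_greatest t : t <= x -> t <= u -> t <= v -> t <= glb x u v.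
Proof. by case/is_glbP: (glbP ux vx) => _ _ _; apply. Qed.

End Bounds.

Lemma le_lub2 x u u' v v' : u' <= x -> v' <= x -> u <= u' -> v <= v' ->
  lub x u v <= lub x u' v'.
Proof.
move=> u'x v'x uu' vv'; have ux := le_trans uu' u'x; have vx := le_trans vv' v'x.
apply: lub_least => //; first exact: lub_le.
  exact: le_trans uu' (le_lubl u'x v'x).
exact: le_trans vv' (le_lubr u'x v'x).
Qed.

Lemma le_glb2 x u u' v v' : u' <= x -> v' <= x -> u <= u' -> v <= v' ->
  glb x u v <= glb x u' v'.
Proof.
move=> u'x v'x uu' vv'; have ux := le_trans uu' u'x; have vx := le_trans vv' v'x.
apply: glb_greatest => //; first exact: le_trans (glb_lel ux vx) ux.
  exact: le_trans (glb_lel ux vx) uu'.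
exact: le_trans (glb_ler ux vx) vv'.
Qed.

Lemma modular_glb_lub x y z w : modular_in x y -> z <= x -> w <= y ->
  glb x y (lub x z w) = lub x (glb x y z) w.
Proof.
move=> [yx ymod] zx wy; have wx := le_trans wy yx.
have gx := le_trans (glb_lel yx zx) yx.
exact: ymod (lubP zx wx) (glbP yx (lub_le zx wx)) (glbP yx zx) (lubP gx wx).
Qed.

Lemma le_maximal_join_closed S x y t : Defs.join_closed S -> maximal_in S y ->
  y <= x -> t \in S -> t <= x -> t <= y.
Proof.
move=> Sjoin /andP[yS /forall_inP ymax] yx tS tx.
have tyS : lub x t y \in S.
  apply: (subsetP (Sjoin _ _)); last exact/lub_mub/lubP.
  by apply/subsetP => q; rewrite !inE => /orP[] /eqP->.
by move/implyP: (ymax _ tyS); rewrite le_lubr // => /(_ isT)/eqP <-; apply: le_lubl.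
Qed.

Hypothesis covers_lub_atom : forall x u v, v <= x ->
  covers u v <-> exists a, [/\ rk a = 1, a <= x, ~~ (a <= u) & is_lub (below x) u a v].

Lemma cover_lub_atom x u v : covers u v -> v <= x ->
  exists b, [/\ rk b = 1, b <= x, ~~ (b <= u) & lub x u b = v].
Proof. by move=> uv vx; have [b [rb bx bu /lubE]] := (covers_lub_atom u vx).1 uv; exists b. Qed.

Lemma rk_lub_atom x u b : rk b = 1 -> b <= x -> u <= x -> ~~ (b <= u) ->
  rk (lub x u b) = (rk u).+1.
Proof.
move=> rb bx ux bu; apply/rk_covers/(covers_lub_atom _ (lub_le ux bx)).
by exists b; split => //; apply: lubP.
Qed.

Lemma rk_lub_atom_le x u b : rk b = 1 -> b <= x -> u <= x ->
  (rk (lub x u b) <= (rk u).+1)%N.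
Proof.
move=> rb bx ux; have [bu | nbu] := boolP (b <= u); last by rewrite rk_lub_atom.
by rewrite lub_l.
Qed.

Lemma ex_atom_le x u v : u < v -> v <= x ->
  exists b, [/\ rk b = 1, b <= v & ~~ (b <= u)].
Proof.
move=> uv vx; have [t ut tv] := ex_cover_above uv.
have [b [rb bx bu tE]] := cover_lub_atom ut (le_trans tv vx).
exists b; split => //; apply: le_trans tv; rewrite -tE.
exact: le_lubr (le_trans (ltW uv) vx) bx.
Qed.

Lemma lub_atom_exchange x p a e : rk a = 1 -> rk e = 1 ->
  p <= x -> a <= x -> e <= x -> ~~ (a <= p) -> a <= lub x p e ->
  lub x p a = lub x p e.
Proof.
move=> ra re px ax ex nap ape.
have pa_pe : lub x p a <= lub x p e.
  exact: (lub_least px ax (lub_le px ex) (le_lubl px ex) ape).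
apply: (le_rk_inj pa_pe); apply/eqP; rewrite eqn_leq rk_le //=.
by rewrite (rk_lub_atom ra ax px nap) rk_lub_atom_le.
Qed.

Lemma lub_exchange_le x a b e w : rk a = 1 -> rk e = 1 ->
  a <= x -> b <= x -> e <= x -> w <= x ->
  ~~ (a <= lub x b w) -> a <= lub x b (lub x w e) -> lub x w e <= lub x (lub x a b) w.
Proof.
move=> ra re ax bx ex wx nap a_bwe; set p := lub x b w.
have px : p <= x by apply: lub_le.
have lx := lub_le ax bx; have pex := lub_le px ex.
have we_pe : lub x w e <= lub x p e by apply: le_lub2 => //; apply: le_lubr.
have ape : a <= lub x p e.
  apply: le_trans a_bwe (lub_least bx (lub_le wx ex) pex _ we_pe).
  exact: le_trans (le_lubl bx wx) (le_lubl px ex).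
apply: (le_trans we_pe); rewrite -(lub_atom_exchange ra re px ax ex nap ape).
apply: (lub_least px ax (lub_le lx wx)).
  by apply: le_lub2 => //; apply: le_lubr.
exact: le_trans (le_lubl ax bx) (le_lubl lx wx).
Qed.

Section ModularCoatom.
Variables (x y : T).
Hypothesis ymod : modular_in x y.
Let yx : y <= x := proj1 ymod.

Lemma glb_lub_atom a t : rk a = 1 -> a <= x -> ~~ (a <= y) -> t <= y ->
  glb x y (lub x a t) = t.
Proof.
move=> ra ax nay ty; rewrite modular_glb_lub //.
have [-> | ya] := le_atom ra (glb_ler yx ax); first by rewrite lub_r // (le_trans ty yx).
by move: nay; rewrite -{1}ya glb_lel.
Qed.

Hypothesis ycoatom : rk x = (rk y).+1.

Lemma lub_coatom b : b <= x -> ~~ (b <= y) -> lub x b y = x.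
Proof.
move=> bx nby; have lx := lub_le bx yx.
have ylt : y < lub x b y.
  by rewrite lt_def le_lubr // andbT; apply: contraNneq nby => <-; apply: le_lubl.
by apply: (le_rk_inj lx); apply/eqP; rewrite eqn_leq rk_le // ycoatom rk_lt.
Qed.

Lemma glb_lub_atoms_neq0 a b : rk a = 1 -> rk b = 1 -> a <= x -> b <= x ->
  ~~ (b <= y) -> a != b -> glb x y (lub x a b) != z0.
Proof.
move=> ra rb ax bx nby nab; set l := lub x a b; have lx : l <= x by apply: lub_le.
apply/eqP => l0.
(* A minimal [w <= y] with [a <= b \/ w] lies below [(a \/ b) \/ w'] for the
   element [w'] it covers, so modularity with [y /\ (a \/ b) = 0] forces [w <= w']. *)
have /ex_minimal[w /andP[wy a_bw] wmin] : [pred w | (w <= y) && (a <= lub x b w)] y.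
  by rewrite /= lexx lub_coatom.
have wx := le_trans wy yx.
have w0 : z0 < w.
  rewrite lt_def le0x andbT; apply: contraNneq nab => w0.
  by move: a_bw; rewrite w0 lub_l // => ab; apply/eqP/(le_rk_inj ab); rewrite ra rb.
have [w' _ w'w] := ex_cover_below w0.
have [e [re ex _ w'e]] := cover_lub_atom w'w wx.
have w'_lt_w : w' < w by case/andP: w'w.
have w'y := le_trans (ltW w'_lt_w) wy; have w'x := le_trans w'y yx.
have nap : ~~ (a <= lub x b w').
  by apply/negP => ap; move: (wmin w'); rewrite /= w'y ap w'_lt_w => /(_ isT).
have := lub_exchange_le ra re ax bx ex w'x nap; rewrite w'e => /(_ a_bw) w_lw'.
have := modular_glb_lub ymod lx w'y; rewrite l0 (lub_r (le0x w') w'x) => glb_lw'.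
have : w <= w' by rewrite -glb_lw'; apply: glb_greatest => //; apply: lub_le.
by move/(lt_le_trans w'_lt_w); rewrite ltxx.
Qed.

Lemma atom_le_lub_glb a b : rk a = 1 -> rk b = 1 -> a <= x -> b <= x ->
  ~~ (a <= y) -> ~~ (b <= y) -> b <= lub x a (glb x y (lub x a b)).
Proof.
move=> ra rb ax bx nay nby; set l := lub x a b; set c := glb x y l.
have lx : l <= x by apply: lub_le.
have cy : c <= y by apply: glb_lel.
have cx := le_trans cy yx.
have [<- | nab] := eqVneq a b; first exact: le_lubl ax cx.
have nba : ~~ (b <= a).
  by apply/negP => /le_rk_inj; rewrite rb ra => /(_ erefl) ba; rewrite ba eqxx in nab.
have nca : ~~ (c <= a).
  apply/negP => /(le_atom ra)[c0 | ca]; last by move: nay; rewrite -ca cy.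
  by move: (glb_lub_atoms_neq0 ra rb ax bx nby nab); rewrite -/l -/c c0 eqxx.
have a_lt_ac : a < lub x a c.
  by rewrite lt_def le_lubl // andbT; apply: contraNneq nca => <-; apply: le_lubr.
have ac_l : lub x a c <= l.
  by apply: lub_least => //; [apply: le_lubl | apply: glb_ler].
suff -> : lub x a c = l by apply: le_lubr.
apply: (le_rk_inj ac_l); apply/eqP; rewrite eqn_leq rk_le //=.
by rewrite /l (rk_lub_atom rb bx ax nba) rk_lt.
Qed.

End ModularCoatom.

Section TMIdeal.
Variables (Q : {set T}) (a : T).
Hypotheses (QTM : TM_ideal rk Q) (rkQ : rank_of rk Q = rank_of rk [set: T] - 1).
Hypotheses (ra : rk a = 1) (aQ : a \notin Q).

Definition join_a y := odflt y [pick w in mub [set a; y]].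

Lemma mub_join_a y : y \in Q -> mub [set a; y] = [set join_a y].
Proof.
case: QTM => _ _ _ mub1 _ yQ.
have /cards1P[w mubE] : #|mub [set a; y]| == 1 by rewrite mub1.
rewrite /join_a mubE; case: pickP => [w' | /(_ w)] /=; rewrite inE ?eqxx //.
by move/eqP->.
Qed.

Lemma join_a_ub y : y \in Q -> a <= join_a y /\ y <= join_a y.
Proof.
move=> yQ; have : join_a y \in mub [set a; y] by rewrite mub_join_a ?set11.
by rewrite inE => /andP[/forall_inP ub _]; split; apply: ub; rewrite !inE eqxx ?orbT.
Qed.

Lemma join_aE x y : y \in Q -> a <= x -> y <= x -> join_a y = lub x a y.
Proof. by move=> yQ ax yx; apply/esym/set1P; rewrite -mub_join_a //; apply/lub_mub/lubP. Qed.

Lemma a_not_le_Q y : y \in Q -> ~~ (a <= y).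
Proof. by case: QTM => Qideal _ _ _ _ yQ; apply: contraNN aQ; apply: Qideal. Qed.

Lemma rk_coatom_Q x y : maximal_in Q y -> a <= x -> y <= x -> rk x = (rk y).+1.
Proof.
move=> ymax ax yx; have yQ : y \in Q by case/andP: ymax.
have y_lt_x : y < x by rewrite lt_def yx andbT; apply: contraNneq (a_not_le_Q yQ) => <-.
have : (rk x <= rank_of rk [set: T])%N by apply: leq_bigmax_cond; rewrite in_setT.
have [_ pureQ _ _ _] := QTM; have := rk_maximal_in pureQ ymax.
by move: (rk_lt y_lt_x); rewrite rkQ; lia.
Qed.

Lemma join_a_le y1 y2 : y1 \in Q -> y2 \in Q -> (join_a y1 <= join_a y2) = (y1 <= y2).
Proof.
move=> y1Q y2Q; have [x xmax j2x] := ex_maximal_in (in_setT (join_a y2)).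
have [[a_j1 y1_j1] [a_j2 y2_j2]] := (join_a_ub y1Q, join_a_ub y2Q).
have ax := le_trans a_j2 j2x; have y2x := le_trans y2_j2 j2x.
apply/idP/idP => [j12 | y12].
  have j1x := le_trans j12 j2x; have y1x := le_trans y1_j1 j1x.
  have [_ _ Qjoin _ /(_ x xmax)[y [ymax ymod]]] := QTM.
  have yQ : y \in Q by case/andP: ymax.
  have yx := proj1 ymod; have nay := a_not_le_Q yQ.
  have y1y := le_maximal_join_closed Qjoin ymax yx y1Q y1x.
  have y2y := le_maximal_join_closed Qjoin ymax yx y2Q y2x.
  rewrite -(glb_lub_atom ymod ra ax nay y1y) -(glb_lub_atom ymod ra ax nay y2y).
  by rewrite -!join_aE //; apply: le_glb2.
have y1x := le_trans y12 y2x.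
by rewrite (join_aE y1Q ax y1x) (join_aE y2Q ax y2x); apply: le_lub2.
Qed.

Lemma join_a_surj z : a <= z -> exists2 y, y \in Q & join_a y = z.
Proof.
move=> az; have [x xmax zx] := ex_maximal_in (in_setT z).
have [Qideal _ _ _ /(_ x xmax)[y [ymax ymod]]] := QTM.
have yQ : y \in Q by case/andP: ymax.
have yx := proj1 ymod; have ax := le_trans az zx; have nay := a_not_le_Q yQ.
have ycoatom := rk_coatom_Q ymax ax yx.
set m := glb x y z; have my : m <= y by apply: glb_lel.
have mx := le_trans my yx; have mQ : m \in Q := Qideal _ _ yQ my.
exists m => //; rewrite (join_aE mQ ax mx); set j := lub x a m.
have jz : j <= z by apply: lub_least => //; apply: glb_ler.
have [// | njz] := eqVneq j z.
have j_lt_z : j < z by rewrite lt_def jz andbT eq_sym.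
have [b [rb bz nbj]] := ex_atom_le j_lt_z zx; have bx := le_trans bz zx.
have nby : ~~ (b <= y).
  by apply: contraNN nbj => by_; apply: le_trans (le_lubr ax mx); apply: glb_greatest.
have c_le_m : glb x y (lub x a b) <= m by apply: le_glb2 => //; apply: lub_least.
have := atom_le_lub_glb ymod ycoatom ra rb ax bx nay nby.
by move=> /le_trans/(_ (le_lub2 ax mx (lexx a) c_le_m)) bj; rewrite bj in nbj.
Qed.

End TMIdeal.

End GeometricPoset.

Unset Implicit Arguments.

Theorem lemma4p4 (d : Order.disp_t) (T : finPOrderType d) (z0 : T)
  (rk : T -> nat) (Q : {set T}) :
  (forall x, z0 <= x) ->
  is_rank_fun rk ->
  locally_geometric rk ->
  TM_ideal rk Q ->
  rank_of rk Q = rank_of rk [set: T] - 1 ->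
  forall a : T, rk a = 1 -> a \notin Q ->
  exists f : T -> T,
    [/\ {in Q, forall y, a <= f y},
        (forall z, a <= z -> exists2 y, y \in Q & f y = z) &
        {in Q &, forall y1 y2, (f y1 <= f y2) = (y1 <= y2)}].
Proof.
move=> le0x rk_fun geom QTM rkQ a ra aQ.
have lattice x : lattice_below x := (geom x).1.
exists (join_a a); split.
- by move=> y yQ; case: (join_a_ub QTM ra aQ yQ).
- exact: (join_a_surj le0x rk_fun lattice (fun x => (geom x).2) QTM rkQ ra aQ).
- exact: (join_a_le le0x rk_fun lattice QTM ra aQ).
Qed.
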